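(* Let $A,B,H,K$ be events with $H\ne\emptyset$, $K\ne\emptyset$. For each coherent prevision assessment $(x,y,w)$ on $\{A|H,B|K,(A|H)\vee(B|K)\}$ there exists $\lambda\in[0,+\infty]$ such that, as random quantities, $(A|H)\vee(B|K)=S_\lambda(A|H,B|K)$.
   Context: Events are identified with their indicators; $\bar E$ is the negation of $E$. For $H\ne\emptyset$ the conditional event $E|H$ is true if $EH$ is true, false if $\bar EH$ is true, void if $\bar H$ is true; with $P(E|H)=x$ it is identified with the random quantity $EH+x\bar H$, and a conditional random quantity $X|H$ with prevision $\mu$ with $XH+\mu\bar H$. Coherence (de Finetti): an assessment $(\mu_1,\dots,\mu_m)$ on $\{X_1|H_1,\dots,X_m|H_m\}$ is coherent iff for all real stakes $s_i$ the gain $G=\sum_is_iH_i(X_i-\mu_i)$, restricted to $H_1\vee\dots\vee H_m$, satisfies $\min G\le0\le\max G$. Disjunction of two conditional events: given $P(A|H)=x$, $P(B|K)=y$ and $w=\mathbb P[((AH\vee BK)+x\bar H\bar BK+y\bar K\bar AH)|(H\vee K)]$, the disjunction $(A|H)\vee(B|K)$ equals $1$ if $AH\vee BK$ is true, $0$ if $\bar AH\bar BK$ is true, $x$ if $\bar H\bar BK$ is true, $y$ if $\bar AH\bar K$ is true, $w$ if $\bar H\bar K$ is true; its prevision is $w$. Frank t-norms $T_\lambda$, $\lambda\in[0,+\infty]$: $T_0(x,y)=\min\{x,y\}$, $T_1(x,y)=xy$, $T_{+\infty}(x,y)=\max\{x+y-1,0\}$, $T_\lambda(x,y)=\log_\lambda\big(1+\frac{(\lambda^x-1)(\lambda^y-1)}{\lambda-1}\big)$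 otherwise. Frank t-conorms: $S_\lambda(x,y)=1-T_\lambda(1-x,1-y)$. $S_\lambda(A|H,B|K)$ is obtained by applying $S_\lambda$ pointwise to the values of $A|H$ and $B|K$. *)

From Stdlib Require Import Reals Lra Bool.
Open Scope R_scope.

(* Events are modelled as boolean predicates on a type of possible worlds
   (constituents) [Omega]; random quantities are real functions on [Omega]. *)

Definition ind (b : bool) : R := if b then 1 else 0.

(* The conditional event E|H with P(E|H)=x, as the random quantity EH + x(not H). *)
Definition cond_event {Omega : Type} (E H : Omega -> bool) (x : R) (o : Omega) : R :=
  ind (E o && H o) + x * ind (negb (H o)).

(* The random quantity  (AH \/ BK) + x ~H ~B K + y ~K ~A H  (the numerator of w). *)
Definition disj_num {Omega : Type} (A H B K : Omega -> bool) (x y : R) (o : Omega) : R :=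
  ind (orb (A o && H o) (B o && K o))
  + x * ind (negb (H o) && negb (B o) && K o)
  + y * ind (negb (K o) && negb (A o) && H o).

(* The disjunction (A|H) \/ (B|K), with prevision w, as the random quantity
   X (H \/ K) + w ~H ~K, where X = disj_num; i.e. it is 1 on AH\/BK, 0 on ~AH~BK,
   x on ~H~BK, y on ~AH~K, w on ~H~K. *)
Definition disj_event {Omega : Type} (A H B K : Omega -> bool) (x y w : R) (o : Omega) : R :=
  disj_num A H B K x y o * ind (orb (H o) (K o)) + w * ind (negb (H o) && negb (K o)).

(* de Finetti coherence of the prevision assessment (x,y,w) on
   {A|H, B|K, (A|H) \/ (B|K)}, the last being the conditional random quantity
   disj_num | (H \/ K) with prevision w: for every choice of real stakes the
   gain restricted to H \/ K satisfies min G <= 0 <= max G. *)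
Definition gain {Omega : Type} (A H B K : Omega -> bool) (x y w s1 s2 s3 : R)
  (o : Omega) : R :=
  s1 * ind (H o) * (ind (A o) - x)
  + s2 * ind (K o) * (ind (B o) - y)
  + s3 * ind (orb (H o) (K o)) * (disj_num A H B K x y o - w).

Definition coherent_disj {Omega : Type} (A H B K : Omega -> bool) (x y w : R) : Prop :=
  forall s1 s2 s3 : R,
    (exists o, (orb (H o) (K o)) = true /\ gain A H B K x y w s1 s2 s3 o <= 0) /\
    (exists o, (orb (H o) (K o)) = true /\ 0 <= gain A H B K x y w s1 s2 s3 o).

Inductive frank_param : Type :=
| LFin : R -> frank_param
| LInf : frank_param.

Definition frank_param_ok (l : frank_param) : Prop :=
  match l with LFin r => 0 <= r | LInf => True end.

Definition frank_tnorm (l : frank_param) (a b : R) : R :=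
  match l with
  | LInf => Rmax (a + b - 1) 0
  | LFin r =>
      if Req_EM_T r 0 then Rmin a b
      else if Req_EM_T r 1 then a * b
      else ln (1 + (Rpower r a - 1) * (Rpower r b - 1) / (r - 1)) / ln r
  end.

Definition frank_tconorm (l : frank_param) (a b : R) : R :=
  1 - frank_tnorm l (1 - a) (1 - b).

(* Off the constituent ~H~K the disjunction takes the values
   1 - (1 - a)(1 - b) of the probabilistic sum applied to the values a, b of
   A|H and B|K, which always lie in {0, 1, x, y}; every Frank t-conorm agrees
   with this there, because 0 and 1 are respectively neutral and absorbing
   for every Frank t-norm.  On ~H~K the disjunction equals w, so one needs a
   lambda with T_lambda(1-x, 1-y) = 1-w.
   - If w = x + y - xy, lambda = 1 (product t-norm) works.
   - Otherwise coherence forces 0 <= x, y <= 1 and the Frechet bounds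
     max(x, y) <= w <= min(x + y, 1).  The Frank family sweeps continuously
     from min (lambda = 0) through product (lambda = 1) towards Lukasiewicz
     (lambda = +oo): writing lambda = e^s, the map s |-> T_{e^s}(a, b) extends
     continuously to s = 0 and gets arbitrarily close to min(a, b) and to
     max(a + b - 1, 0) as s -> -oo and s -> +oo, so the intermediate value
     theorem yields lambda; the two extreme values are lambda = 0 and +oo.

   The Frechet bounds come from explicit bets: rewritten through the values
   a, b of A|H and B|K, the gain on H \/ K is
   s1 (a - x) + s2 (b - y) + s3 (S_1(a, b) - w), and a sign-constant a - x
   (which is what x outside [0,1] would give) allows a bet winning everywhere.
   The argument does not use the nonemptiness of H and K. *)
From Pilot Require Import Defs.
From Stdlib Require Import Reals Lra.
Open Scope R_scope.

Definition unit_zero_laws (T : R -> R -> R) (a : R) : Prop :=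
  T a 1 = a /\ T 1 a = a /\ T a 0 = 0 /\ T 0 a = 0.

(* Every Frank t-norm satisfies the unit/zero laws on [0,1]; this is why the
   t-conorm agrees with the disjunction wherever H or K is true. *)
Lemma frank_tnorm_unit_zero (l : frank_param) (a : R) :
  frank_param_ok l -> 0 <= a <= 1 -> unit_zero_laws (frank_tnorm l) a.
Proof.
  unfold unit_zero_laws; destruct l as [r|]; simpl; intros Hl Ha.
  - destruct (Req_EM_T r 0) as [_|Hr0].
    { unfold Rmin; repeat split; destruct Rle_dec; lra. }
    destruct (Req_EM_T r 1) as [_|Hr1]; [repeat split; ring|].
    assert (Hr : 0 < r) by lra.
    assert (Hlnr : ln r <> 0) by (apply ln_neq_0; assumption).
    rewrite Rpower_1, Rpower_O by exact Hr.
    replace (1 + (Rpower r a - 1) * (r - 1) / (r - 1)) with (Rpower r a) by (field; lra).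
    replace (1 + (r - 1) * (Rpower r a - 1) / (r - 1)) with (Rpower r a) by (field; lra).
    replace (1 + (Rpower r a - 1) * (1 - 1) / (r - 1)) with 1 by (field; lra).
    replace (1 + (1 - 1) * (Rpower r a - 1) / (r - 1)) with 1 by (field; lra).
    rewrite ln_Rpower, ln_1; repeat split; field; exact Hlnr.
  - unfold Rmax; repeat split; destruct Rle_dec; lra.
Qed.

Lemma frank_tnorm_product (a b : R) : frank_tnorm (LFin 1) a b = a * b.
Proof.
  simpl; destruct (Req_EM_T 1 0); [lra|].
  destruct (Req_EM_T 1 1); [reflexivity | congruence].
Qed.

Lemma frank_tnorm_product_unit_zero (a : R) : unit_zero_laws (frank_tnorm (LFin 1)) a.
Proof. unfold unit_zero_laws; rewrite !frank_tnorm_product; repeat split; ring. Qed.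

Lemma exp_le (u v : R) : u <= v -> exp u <= exp v.
Proof. intros [Huv| ->]; [left; apply exp_increasing|]; lra. Qed.

Lemma ln_le (p q : R) : 0 < p -> p <= q -> ln p <= ln q.
Proof. intros Hp [Hpq| ->]; [left; apply ln_increasing|]; lra. Qed.

(* The difference quotient (f u - f 0) / u, extended at u = 0 by d; it is used
   to remove the singularity of the Frank family at lambda = 1. *)
Definition slope_at0 (f : R -> R) (d u : R) : R :=
  if Req_EM_T u 0 then d else (f u - f 0) / u.

Lemma slope_at0_zero (f : R -> R) (d : R) : slope_at0 f d 0 = d.
Proof. unfold slope_at0; destruct (Req_EM_T 0 0); [reflexivity | congruence]. Qed.

Lemma slope_at0_continuous (f : R -> R) (d u : R) :
  derivable_pt_lim f 0 d -> (u <> 0 -> continuity_pt f u) ->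
  continuity_pt (slope_at0 f d) u.
Proof.
  intros Hd Hf; destruct (Req_EM_T u 0) as [->|Hu].
  - intros eps Heps; destruct (Hd eps Heps) as [delta Hdelta].
    exists delta; split; [apply cond_pos|].
    intros h [_ Hh]; simpl in *; unfold Rdist in *; rewrite Rminus_0_r in Hh.
    rewrite slope_at0_zero; unfold slope_at0.
    destruct (Req_EM_T h 0) as [->|Hh0].
    + rewrite Rminus_diag, Rabs_R0; exact Heps.
    + specialize (Hdelta h Hh0 Hh); rewrite Rplus_0_l in Hdelta; exact Hdelta.
  - apply continuity_pt_locally_ext with (f := fun v => (f v - f 0) / v) (a := Rabs u).
    + apply Rabs_pos_lt; exact Hu.
    + intros v Hv; unfold slope_at0; destruct (Req_EM_T v 0) as [->|]; [|reflexivity].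
      unfold Rdist in Hv; rewrite Rminus_0_l, Rabs_Ropp in Hv; lra.
    + apply continuity_pt_div; [apply continuity_pt_minus| |exact Hu].
      * exact (Hf Hu).
      * apply continuity_pt_const; intros p q; reflexivity.
      * apply derivable_continuous_pt, derivable_pt_id.
Qed.

Definition exp_slope : R -> R := slope_at0 exp 1.
Definition log1p_slope : R -> R := slope_at0 (fun u => ln (1 + u)) 1.

Lemma exp_slope_nonzero (u : R) : u <> 0 -> exp_slope u = (exp u - 1) / u.
Proof.
  intro Hu; unfold exp_slope, slope_at0; rewrite exp_0.
  destruct (Req_EM_T u 0); [contradiction | reflexivity].
Qed.

Lemma log1p_slope_nonzero (u : R) : u <> 0 -> log1p_slope u = ln (1 + u) / u.
Proof.
  intro Hu; unfold log1p_slope, slope_at0; rewrite Rplus_0_r, ln_1, Rminus_0_r.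
  destruct (Req_EM_T u 0); [contradiction | reflexivity].
Qed.

(* e^u - 1 has the sign of u. *)
Lemma exp_slope_pos (u : R) : 0 < exp_slope u.
Proof.
  destruct (Req_EM_T u 0) as [->|Hu].
  { unfold exp_slope; rewrite slope_at0_zero; lra. }
  rewrite exp_slope_nonzero by exact Hu.
  assert (Hsign : 0 < (exp u - 1) * u).
  { pose proof (exp_ineq1 u Hu).
    destruct (Rlt_or_le 0 u) as [Hp|Hn]; [nra|].
    assert (exp u < 1) by (rewrite <- exp_0; apply exp_increasing; lra); nra. }
  replace ((exp u - 1) / u) with ((exp u - 1) * u / (u * u)) by (field; exact Hu).
  apply Rdiv_lt_0_compat; [exact Hsign|]. assert (0 < u * u) by nra; lra.
Qed.

Lemma exp_slope_continuous (u : R) : continuity_pt exp_slope u.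
Proof.
  apply slope_at0_continuous.
  - exact derivable_pt_lim_exp_0.
  - intros _; apply derivable_continuous_pt, derivable_pt_exp.
Qed.

Lemma log1p_slope_continuous (u : R) : -1 < u -> continuity_pt log1p_slope u.
Proof.
  intro Hu; apply slope_at0_continuous.
  - assert (Hshift : derivable_pt_lim (fun v => 1 + v) 0 1).
    { intros eps Heps; exists (mkposreal 1 Rlt_0_1); intros h Hh _.
      replace ((1 + (0 + h) - (1 + 0)) / h - 1) with 0 by (field; exact Hh).
      rewrite Rabs_R0; exact Heps. }
    assert (Hln : derivable_pt_lim ln (1 + 0) 1).
    { replace 1 with (/ (1 + 0)) at 2 by field. apply derivable_pt_lim_ln; lra. }
    pose proof (derivable_pt_lim_comp _ _ _ _ _ Hshift Hln) as Hcomp.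
    rewrite Rmult_1_r in Hcomp; exact Hcomp.
  - intros _; apply (continuity_pt_comp (fun v => 1 + v) ln).
    + apply continuity_pt_plus; [apply continuity_pt_const; intros p q; reflexivity|].
      apply derivable_continuous_pt, derivable_pt_id.
    + apply derivable_continuous_pt; exists (/ (1 + u)); apply derivable_pt_lim_ln; lra.
Qed.

(* For lambda = e^s (s <> 0), T_lambda(a, b) = ln (frank_q a b s) / s. *)
Definition frank_q (a b s : R) : R :=
  1 + (exp (a * s) - 1) * (exp (b * s) - 1) / (exp s - 1).

Lemma exp_neq_1 (s : R) : s <> 0 -> exp s <> 1.
Proof. intros Hs E; apply Hs, exp_inv; rewrite exp_0; exact E. Qed.

Lemma frank_tnorm_exp (a b s : R) :
  s <> 0 -> frank_tnorm (LFin (exp s)) a b = ln (frank_q a b s) / s.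
Proof.
  intro Hs; simpl.
  destruct (Req_EM_T (exp s) 0) as [E|_]; [pose proof (exp_pos s); lra|].
  destruct (Req_EM_T (exp s) 1) as [E|_]; [exfalso; exact (exp_neq_1 s Hs E)|].
  unfold frank_q, Rpower; rewrite ln_exp; reflexivity.
Qed.

Lemma frank_q_pos (a b s : R) :
  0 <= a <= 1 -> 0 <= b <= 1 -> s <> 0 -> 0 < frank_q a b s.
Proof.
  intros Ha Hb Hs; unfold frank_q.
  destruct (Rlt_or_le 0 s) as [Hp|Hn].
  - assert (1 <= exp (a * s)) by (rewrite <- exp_0; apply exp_le; nra).
    assert (1 <= exp (b * s)) by (rewrite <- exp_0; apply exp_le; nra).
    assert (1 < exp s) by (rewrite <- exp_0; apply exp_increasing; lra).
    assert (0 <= (exp (a * s) - 1) * (exp (b * s) - 1) / (exp s - 1)).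
    { unfold Rdiv; apply Rmult_le_pos; [nra | left; apply Rinv_0_lt_compat; lra]. }
    lra.
  - assert (exp s <= exp (a * s) <= 1) by (rewrite <- exp_0; split; apply exp_le; nra).
    assert (exp (b * s) <= 1) by (rewrite <- exp_0; apply exp_le; nra).
    assert (exp s < 1) by (rewrite <- exp_0; apply exp_increasing; lra).
    pose proof (exp_pos (b * s)).
    replace (1 + (exp (a * s) - 1) * (exp (b * s) - 1) / (exp s - 1))
      with (((1 - exp s) - (1 - exp (a * s)) * (1 - exp (b * s))) / (1 - exp s))
      by (field; lra).
    apply Rdiv_lt_0_compat; nra.
Qed.

(* frank_scaled a b s = (frank_q a b s - 1) / s, written with the regularised
   slopes so that it is continuous in s and equals ab at s = 0; with
   m = frank_scaled a b s, frank_curve writes ln(frank_q)/s = ln(1 + sm)/s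
   as m * (ln(1 + sm)/(sm)). *)
Definition frank_scaled (a b s : R) : R :=
  a * b * exp_slope (a * s) * exp_slope (b * s) / exp_slope s.

Definition frank_curve (a b s : R) : R :=
  frank_scaled a b s * log1p_slope (s * frank_scaled a b s).

Lemma frank_scaled_pos (a b s : R) : 0 < a -> 0 < b -> 0 < frank_scaled a b s.
Proof.
  intros Ha Hb; unfold frank_scaled.
  pose proof (exp_slope_pos (a * s)); pose proof (exp_slope_pos (b * s));
    pose proof (exp_slope_pos s).
  apply Rdiv_lt_0_compat; [|assumption].
  repeat apply Rmult_lt_0_compat; assumption.
Qed.

Lemma frank_scaled_mul (a b s : R) :
  0 < a -> 0 < b -> s <> 0 -> s * frank_scaled a b s = frank_q a b s - 1.
Proof.
  intros Ha Hb Hs; unfold frank_scaled, frank_q.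
  assert (a * s <> 0) by (apply Rmult_integral_contrapositive; split; lra).
  assert (b * s <> 0) by (apply Rmult_integral_contrapositive; split; lra).
  assert (exp s - 1 <> 0) by (pose proof (exp_neq_1 s Hs); lra).
  rewrite !exp_slope_nonzero by assumption.
  field; repeat split; lra.
Qed.

Lemma frank_curve_spec (a b s : R) :
  0 < a <= 1 -> 0 < b <= 1 -> frank_tnorm (LFin (exp s)) a b = frank_curve a b s.
Proof.
  intros Ha Hb; unfold frank_curve.
  destruct (Req_EM_T s 0) as [->|Hs].
  - rewrite exp_0; simpl.
    destruct (Req_EM_T 1 0); [lra|]; destruct (Req_EM_T 1 1); [|congruence].
    unfold frank_scaled, exp_slope, log1p_slope; rewrite !Rmult_0_r, Rmult_0_l, !slope_at0_zero.
    field.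
  - pose proof (frank_scaled_pos a b s (proj1 Ha) (proj1 Hb)) as Hm.
    pose proof (frank_scaled_mul a b s (proj1 Ha) (proj1 Hb) Hs) as Hsm.
    assert (Hsm0 : s * frank_scaled a b s <> 0) by (apply Rmult_integral_contrapositive; lra).
    rewrite frank_tnorm_exp, log1p_slope_nonzero by assumption.
    rewrite Hsm; replace (1 + (frank_q a b s - 1)) with (frank_q a b s) by ring.
    rewrite <- Hsm; field; lra.
Qed.

Lemma frank_curve_continuous (a b : R) :
  0 < a <= 1 -> 0 < b <= 1 -> continuity (frank_curve a b).
Proof.
  intros Ha Hb s.
  assert (Hlin : forall k t, continuity_pt (fun v => k * v) t).
  { intros k t; apply continuity_pt_mult;
      [apply continuity_pt_const; intros p q; reflexivity | apply derivable_continuous_pt, derivable_pt_id]. }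
  assert (Hm : forall s, continuity_pt (frank_scaled a b) s).
  { clear s; intro s; unfold frank_scaled.
    apply continuity_pt_div; [| apply exp_slope_continuous | pose proof (exp_slope_pos s); lra].
    repeat apply continuity_pt_mult; try (apply continuity_pt_const; intros p q; reflexivity).
    - exact (continuity_pt_comp _ _ s (Hlin a s) (exp_slope_continuous (a * s))).
    - exact (continuity_pt_comp _ _ s (Hlin b s) (exp_slope_continuous (b * s))). }
  assert (Harg : -1 < s * frank_scaled a b s).
  { destruct (Req_EM_T s 0) as [->|Hs]; [lra|].
    rewrite frank_scaled_mul by lra; pose proof (frank_q_pos a b s); lra. }
  unfold frank_curve; apply continuity_pt_mult; [apply Hm|].
  apply (continuity_pt_comp (fun s => s * frank_scaled a b s) log1p_slope).
  - apply continuity_pt_mult; [apply derivable_continuous_pt, derivable_pt_id | apply Hm].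
  - apply log1p_slope_continuous; exact Harg.
Qed.

Lemma log_ratio_le (Q c s : R) : 0 < s -> 0 < Q -> Q <= exp (c * s) -> ln Q / s <= c.
Proof.
  intros Hs HQ HQc.
  assert (Hl : ln Q <= c * s) by (rewrite <- (ln_exp (c * s)); apply ln_le; assumption).
  assert (E : ln Q / s * s = ln Q) by (field; lra).
  nra.
Qed.

Lemma log_ratio_ge (Q c s : R) : s < 0 -> 0 < Q -> Q <= exp (c * s) -> c <= ln Q / s.
Proof.
  intros Hs HQ HQc.
  assert (Hl : ln Q <= c * s) by (rewrite <- (ln_exp (c * s)); apply ln_le; assumption).
  assert (E : ln Q / s * s = ln Q) by (field; lra).
  nra.
Qed.

Lemma exp_ln4_scaled (d : R) : 0 < d -> exp (d * (ln 4 / d)) = 4.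
Proof. intro Hd; replace (d * (ln 4 / d)) with (ln 4) by (field; lra); apply exp_ln; lra. Qed.

Lemma ln4_pos : 0 < ln 4.
Proof. rewrite <- ln_1; apply ln_increasing; lra. Qed.

Lemma frank_tnorm_exp_above (a b c : R) :
  0 < a <= 1 -> 0 < b <= 1 -> 0 <= c -> c < a -> c < b ->
  exists s, s < 0 /\ c <= frank_tnorm (LFin (exp s)) a b.
Proof.
  intros Ha Hb Hc Hca Hcb.
  set (m := Rmin a b).
  assert (Hm : c < m <= a /\ m <= b)
    by (unfold m, Rmin; destruct Rle_dec; lra).
  set (k := ln 4 / (m - c)).
  pose proof ln4_pos.
  assert (Hk : ln 4 <= k).
  { unfold k; apply Rmult_le_reg_r with (m - c); [lra|].
    replace (ln 4 / (m - c) * (m - c)) with (ln 4) by (field; lra). nra. }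
  exists (- k); split; [lra|].
  rewrite frank_tnorm_exp by lra.
  apply log_ratio_ge; [lra | apply frank_q_pos; lra |].
  (* with t_z = e^(-zk): t_m = t_c / 4, t_a, t_b <= t_m and t_1 <= 1/4 *)
  assert (Hmc : exp (m * - k) = exp (c * - k) / 4).
  { pose proof (exp_ln4_scaled (m - c) ltac:(lra)) as E4; fold k in E4.
    replace (c * - k) with (m * - k + (m - c) * k) by ring.
    rewrite exp_plus, E4; field. }
  assert (exp (a * - k) <= exp (m * - k)) by (apply exp_le; nra).
  assert (exp (b * - k) <= exp (m * - k)) by (apply exp_le; nra).
  assert (exp (- k) <= / 4).
  { rewrite exp_Ropp; apply Rinv_le_contravar; [lra|].
    rewrite <- (exp_ln 4) by lra; apply exp_le; exact Hk. }
  pose proof (exp_pos (a * - k)); pose proof (exp_pos (b * - k)); pose proof (exp_pos (- k)).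
  pose proof (exp_pos (c * - k)).
  unfold frank_q.
  set (ta := exp (a * - k)) in *; set (tb := exp (b * - k)) in *; set (t := exp (- k)) in *.
  set (tc := exp (c * - k)) in *; set (tm := exp (m * - k)) in *.
  set (z := (ta - 1) * (tb - 1) / (t - 1)).
  assert (Hz : z * (t - 1) = (ta - 1) * (tb - 1)) by (unfold z; field; lra).
  nra.
Qed.

Lemma frank_tnorm_exp_below (a b c : R) :
  0 < a <= 1 -> 0 < b <= 1 -> a + b - 1 < c -> 0 < c -> c <= 1 ->
  exists s, 0 < s /\ frank_tnorm (LFin (exp s)) a b <= c.
Proof.
  intros Ha Hb Habc Hc Hc1.
  set (d := Rmin c (c - (a + b - 1))).
  assert (Hd : 0 < d /\ d <= c /\ d <= c - (a + b - 1))
    by (unfold d, Rmin; destruct Rle_dec; lra).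
  set (k := ln 4 / d).
  pose proof ln4_pos.
  assert (Hk : ln 4 <= k).
  { unfold k; apply Rmult_le_reg_r with d; [lra|].
    replace (ln 4 / d * d) with (ln 4) by (field; lra). nra. }
  exists k; split; [lra|].
  rewrite frank_tnorm_exp by lra.
  apply log_ratio_le; [lra | apply frank_q_pos; lra |].
  (* with t_z = e^(zk): t_1, t_c >= 4 and 4 t_a t_b <= t_c t_1 *)
  assert (E4 : exp (d * k) = 4) by (apply exp_ln4_scaled; lra).
  assert (4 <= exp (c * k)) by (rewrite <- E4; apply exp_le; nra).
  assert (4 <= exp k) by (rewrite <- (exp_ln 4) by lra; apply exp_le; lra).
  assert (exp (a * k) * exp (b * k) * 4 <= exp (c * k) * exp k).
  { rewrite <- E4, <- !exp_plus; apply exp_le; nra. }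
  assert (1 <= exp (a * k)) by (rewrite <- exp_0; apply exp_le; nra).
  assert (1 <= exp (b * k)) by (rewrite <- exp_0; apply exp_le; nra).
  unfold frank_q.
  set (ta := exp (a * k)) in *; set (tb := exp (b * k)) in *; set (t := exp k) in *.
  set (tc := exp (c * k)) in *.
  set (z := (ta - 1) * (tb - 1) / (t - 1)).
  assert (Hz : z * (t - 1) = (ta - 1) * (tb - 1)) by (unfold z; field; lra).
  nra.
Qed.

Lemma frank_tnorm_onto (a b c : R) :
  0 <= a <= 1 -> 0 <= b <= 1 -> a + b - 1 <= c -> 0 <= c -> c <= a -> c <= b ->
  exists l, frank_param_ok l /\ frank_tnorm l a b = c.
Proof.
  intros Ha Hb Hluk H0 Hca Hcb.
  destruct (Req_EM_T c a) as [Eca|Nca]; [|destruct (Req_EM_T c b) as [Ecb|Ncb]].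
  1, 2: exists (LFin 0); split; [simpl; lra|]; simpl;
    destruct (Req_EM_T 0 0) as [_|]; [|congruence]; unfold Rmin; destruct Rle_dec; lra.
  destruct (Req_EM_T c (a + b - 1)) as [Eluk|Nluk]; [|destruct (Req_EM_T c 0) as [E0|N0]].
  1, 2: exists LInf; split; [exact I|]; simpl; unfold Rmax; destruct Rle_dec; lra.
  destruct (frank_tnorm_exp_above a b c) as [s0 [Hs0 Habove]]; [lra ..|].
  destruct (frank_tnorm_exp_below a b c) as [s1 [Hs1 Hbelow]]; [lra ..|].
  rewrite frank_curve_spec in Habove, Hbelow by lra.
  destruct (IVT_cor (fun s => c - frank_curve a b s) s0 s1) as [z [_ Hz]].
  - apply continuity_minus; [apply continuity_const; intros p q; reflexivity|].
    apply frank_curve_continuous; lra.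
  - lra.
  - simpl; nra.
  - exists (LFin (exp z)); split; [simpl; left; apply exp_pos|].
    rewrite frank_curve_spec by lra; simpl in Hz; lra.
Qed.


Definition prob_sum (a b : R) : R := a + b - a * b.

Lemma cond_event_value {Omega : Type} (E C : Omega -> bool) (z : R) (o : Omega) :
  cond_event E C z o = if C o then Defs.ind (E o) else z.
Proof. unfold cond_event; destruct (C o), (E o); simpl; ring. Qed.

Lemma cond_event_cases {Omega : Type} (E C : Omega -> bool) (z : R) (o : Omega) :
  cond_event E C z o = 0 \/ cond_event E C z o = 1 \/ cond_event E C z o = z.
Proof. rewrite cond_event_value; destruct (C o), (E o); simpl; auto. Qed.

Section Disjunction.
Variables (Omega : Type) (A B H K : Omega -> bool) (x y w : R).

Lemma disj_event_value (o : Omega) :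
  disj_event A H B K x y w o =
  if orb (H o) (K o) then prob_sum (cond_event A H x o) (cond_event B K y o) else w.
Proof.
  rewrite !cond_event_value; unfold disj_event, disj_num, prob_sum.
  destruct (H o), (K o), (A o), (B o); simpl; ring.
Qed.

Lemma disj_event_as_tconorm (T : R -> R -> R) :
  unit_zero_laws T 0 -> unit_zero_laws T 1 ->
  unit_zero_laws T (1 - x) -> unit_zero_laws T (1 - y) -> T (1 - x) (1 - y) = 1 - w ->
  forall o, disj_event A H B K x y w o
            = 1 - T (1 - cond_event A H x o) (1 - cond_event B K y o).
Proof.
  intros L0 L1 Lx Ly Hxy o; rewrite disj_event_value, !cond_event_value.
  destruct L0 as [? [? [? ?]]], L1 as [? [? [? ?]]], Lx as [? [? [? ?]]], Ly as [? [? [? ?]]].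
  unfold prob_sum; destruct (H o), (K o), (A o), (B o); simpl;
    rewrite ?Rminus_0_r, ?Rminus_diag; try lra.
Qed.

Lemma gain_on_disjunction (s1 s2 s3 : R) (o : Omega) :
  orb (H o) (K o) = true ->
  gain A H B K x y w s1 s2 s3 o
  = s1 * (cond_event A H x o - x) + s2 * (cond_event B K y o - y)
    + s3 * (prob_sum (cond_event A H x o) (cond_event B K y o) - w).
Proof.
  intro HK; rewrite !cond_event_value; unfold gain, disj_num, prob_sum.
  destruct (H o), (K o), (A o), (B o); simpl in *; try discriminate; ring.
Qed.

End Disjunction.

Definition avoids_sure_gain {Omega : Type} (P : Omega -> Prop) (a b : Omega -> R)
  (x y w : R) : Prop :=
  forall s1 s2 s3 : R, exists o, P o /\
    s1 * (a o - x) + s2 * (b o - y) + s3 * (prob_sum (a o) (b o) - w) <= 0.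

Lemma coherent_avoids_sure_gain {Omega : Type} (A B H K : Omega -> bool) (x y w : R) :
  coherent_disj A H B K x y w ->
  avoids_sure_gain (fun o => orb (H o) (K o) = true)
    (cond_event A H x) (cond_event B K y) x y w.
Proof.
  intros Hcoh s1 s2 s3; destruct (Hcoh s1 s2 s3) as [[o [HKo Hg]] _].
  exists o; split; [exact HKo|]; rewrite <- gain_on_disjunction by exact HKo; exact Hg.
Qed.

Lemma avoids_sure_gain_sym {Omega : Type} (P : Omega -> Prop) (a b : Omega -> R) (x y w : R) :
  avoids_sure_gain P a b x y w -> avoids_sure_gain P b a y x w.
Proof.
  intros Hsg s1 s2 s3; destruct (Hsg s2 s1 s3) as [o [Po Hg]].
  exists o; split; [exact Po|]; unfold prob_sum in *; lra.
Qed.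

(* The algebraic core of the bet used in [no_constant_sign]. *)
Lemma sure_gain_witness (D M u v : R) :
  D <> 0 -> 0 <= u -> v * v <= M -> 0 < (D * D + M) * u + D * (D - u * v).
Proof.
  intros HD Hu Hv.
  assert (0 < D * D) by (apply Rsqr_pos_lt; exact HD).
  assert (D * v <= D * D + M) by nra.
  nra.
Qed.

Section SureGain.
Variables (Omega : Type) (P : Omega -> Prop) (a b : Omega -> R) (x y w : R).
Hypothesis Hsg : avoids_sure_gain P a b x y w.
Hypothesis Ha : forall o, a o = 0 \/ a o = 1 \/ a o = x.
Hypothesis Hb : forall o, b o = 0 \/ b o = 1 \/ b o = y.

(* Unless w = S_1(x, y), the centred value a - x cannot have constant sign:
   otherwise a suitable bet (weights D^2 + M on a - x, D on the disjunction,
   D = S_1(x, y) - w) would win strictly everywhere. *)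
Lemma no_constant_sign (sg : R) :
  sg * sg = 1 -> w <> prob_sum x y -> ~ (forall o, 0 <= sg * (a o - x)).
Proof.
  intros Hsg1 Hw Hsign.
  set (D := prob_sum x y - w); set (M := y * y + (1 - y) * (1 - y)).
  destruct (Hsg (sg * (D * D + M) - D * (1 - y)) (- D * (1 - x)) D) as [o [_ Hg]].
  assert (Hv : (b o - y) * (b o - y) <= M)
    by (unfold M; pose proof (Rle_0_sqr y); pose proof (Rle_0_sqr (1 - y)); unfold Rsqr in *;
        destruct (Hb o) as [E|[E|E]]; rewrite E; lra).
  assert (HD : D <> 0) by (unfold D; lra).
  assert (Hsq : forall t, sg * t * (sg * t) = t * t)
    by (intro t; transitivity (sg * sg * (t * t)); [ring | rewrite Hsg1; ring]).
  pose proof (sure_gain_witness D M (sg * (a o - x)) (sg * (b o - y)) HD (Hsign o)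
    ltac:(rewrite Hsq; exact Hv)).
  assert (Hid : (sg * (D * D + M) - D * (1 - y)) * (a o - x) + - D * (1 - x) * (b o - y)
                + D * (prob_sum (a o) (b o) - w)
              = (D * D + M) * (sg * (a o - x)) + D * (D - sg * (a o - x) * (sg * (b o - y)))).
  { replace (sg * (a o - x) * (sg * (b o - y))) with (sg * sg * ((a o - x) * (b o - y)))
      by ring.
    rewrite Hsg1; unfold D, prob_sum; ring. }
  lra.
Qed.

(* Consequently x is a probability: a value x outside [0,1] would make a - x,
   with a in {0, 1, x}, of constant sign. *)
Lemma sure_gain_range : w <> prob_sum x y -> 0 <= x <= 1.
Proof.
  intro Hw; split.
  - destruct (Rle_or_lt 0 x) as [|Hx]; [assumption|]; exfalso.
    apply (no_constant_sign 1); [ring | exact Hw |].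
    intro o; destruct (Ha o) as [E|[E|E]]; rewrite E; lra.
  - destruct (Rle_or_lt x 1) as [|Hx]; [assumption|]; exfalso.
    apply (no_constant_sign (-1)); [ring | exact Hw |].
    intro o; destruct (Ha o) as [E|[E|E]]; rewrite E; lra.
Qed.

Lemma sure_gain_bounds : 0 <= x <= 1 -> 0 <= y <= 1 -> x <= w /\ w <= 1 /\ w <= x + y.
Proof.
  intros Hx Hy.
  assert (Hab : forall o, 0 <= a o <= 1 /\ 0 <= b o <= 1)
    by (intro o; destruct (Ha o) as [Ea|[Ea|Ea]], (Hb o) as [Eb|[Eb|Eb]]; rewrite Ea, Eb; lra).
  (* each bound comes from one bet whose gain is bounded below by the violation *)
  split; [|split].
  - destruct (Hsg (-1) 0 1) as [o [_ Hg]]; unfold prob_sum in Hg; destruct (Hab o).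
    assert (0 <= b o * (1 - a o)) by (apply Rmult_le_pos; lra); lra.
  - destruct (Hsg 0 0 (-1)) as [o [_ Hg]]; unfold prob_sum in Hg; destruct (Hab o).
    assert (0 <= (1 - a o) * (1 - b o)) by (apply Rmult_le_pos; lra); lra.
  - destruct (Hsg 1 1 (-1)) as [o [_ Hg]]; unfold prob_sum in Hg; destruct (Hab o).
    assert (0 <= a o * b o) by (apply Rmult_le_pos; lra); lra.
Qed.

End SureGain.

Lemma coherent_frechet_bounds {Omega : Type} (A B H K : Omega -> bool) (x y w : R) :
  coherent_disj A H B K x y w -> w <> prob_sum x y ->
  0 <= x <= 1 /\ 0 <= y <= 1 /\ x <= w /\ y <= w /\ w <= 1 /\ w <= x + y.
Proof.
  intros Hcoh Hw.
  pose proof (coherent_avoids_sure_gain A B H K x y w Hcoh) as Hsg.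
  pose proof (avoids_sure_gain_sym _ _ _ _ _ _ Hsg) as Hsg'.
  pose proof (cond_event_cases A H x) as Ha; pose proof (cond_event_cases B K y) as Hb.
  assert (Hw' : w <> prob_sum y x) by (unfold prob_sum in *; lra).
  pose proof (sure_gain_range _ _ _ _ _ _ _ Hsg Ha Hb Hw) as Hx.
  pose proof (sure_gain_range _ _ _ _ _ _ _ Hsg' Hb Ha Hw') as Hy.
  pose proof (sure_gain_bounds _ _ _ _ _ _ _ Hsg Ha Hb Hx Hy).
  pose proof (sure_gain_bounds _ _ _ _ _ _ _ Hsg' Hb Ha Hy Hx).
  lra.
Qed.

Theorem theorem16 (Omega : Type) (A B H K : Omega -> bool)
  (HH : exists o, H o = true) (HK : exists o, K o = true)
  (x y w : R) (Hcoh : coherent_disj A H B K x y w) :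
  exists l : frank_param, frank_param_ok l /\
    forall o : Omega,
      disj_event A H B K x y w o
      = frank_tconorm l (cond_event A H x o) (cond_event B K y o).
Proof.
  destruct (Req_EM_T w (prob_sum x y)) as [Hw|Hw].
  -
    exists (LFin 1); split; [simpl; lra|]; intro o; unfold frank_tconorm.
    apply disj_event_as_tconorm; try apply frank_tnorm_product_unit_zero.
    rewrite frank_tnorm_product; unfold prob_sum in Hw; lra.
  - destruct (coherent_frechet_bounds A B H K x y w Hcoh Hw)
      as (Hx & Hy & Hxw & Hyw & Hw1 & Hwxy).
    destruct (frank_tnorm_onto (1 - x) (1 - y) (1 - w)) as [l [Hl Hlw]]; [lra .. |].
    exists l; split; [exact Hl|]; intro o; unfold frank_tconorm.
    apply disj_event_as_tconorm; try exact Hlw;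
      (apply frank_tnorm_unit_zero; [exact Hl | lra]).
Qed.
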